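(* Let $0=t_0<\dots<t_N=T$, $\tau_k=t_k-t_{k-1}$, $r_k=\tau_k/\tau_{k-1}$ ($2\le k\le N$). Let $r_{\max}\approx4.8645$ be the positive root of $x^3=(2x+1)^2$, fix $\delta\in(0,r_{\max})$, assume $r_2>0$ and $0<r_k\le r_{\max}-\delta$ for $3\le k\le N$, and set $C_r=\sqrt{r_{\max}}/(1+r_{\max})^2$. Let $\mathcal V_h$ be the space of grid functions $v=(v_0,\dots,v_M)$ with $v_0=v_M=0$, with $\Delta_hv_i=(v_{i+1}-2v_i+v_{i-1})/h^2$, $\nabla_hv_i=(v_{i+1}-v_{i-1})/(2h)$, $\langle u,v\rangle=\sum_{i=1}^{M-1}hu_iv_i$, $\|u\|=\sqrt{\langle u,u\rangle}$. Then for any $\epsilon>0$, any $2\le n\le N$ and any $u^k\in\mathcal V_h$ ($1\le k\le n$), $$2\sum_{k=2}^n\sum_{j=2}^k\theta^{(k)}_{k-j}\langle-\Delta_hu^j,u^k\rangle+\frac{\epsilon^2}{C_r\delta}\sum_{k=2}^n\tau_k\|u^k\|^2\ge2\epsilon\sum_{k=2}^n\sum_{j=2}^k\theta^{(k)}_{k-j}\langle\nabla_hu^j,u^k\rangle.$$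
   Context: BDF2 kernels: $b^{(1)}_0=1/\tau_1$; for $n\ge2$, $b^{(n)}_0=\frac{1+2r_n}{\tau_n(1+r_n)}$, $b^{(n)}_1=-\frac{r_n^2}{\tau_n(1+r_n)}$, $b^{(n)}_j=0$ for $2\le j\le n-1$. DOC kernels $\theta^{(n)}_{n-j}$ ($1\le j\le n$) are defined by $\sum_{j=k}^n\theta^{(n)}_{n-j}b^{(j)}_{j-k}=\delta_{nk}$ for all $1\le k\le n$. *)

From HB Require Import structures.
From mathcomp Require Import all_boot all_order all_algebra.
Set Implicit Arguments. Unset Strict Implicit. Unset Printing Implicit Defensive.
Import Order.TTheory GRing.Theory Num.Theory.
Local Open Scope ring_scope.

Section Defs.
Context {R : rcfType}.

Definition tau (t : nat -> R) (k : nat) : R := t k - t k.-1.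
Definition tratio (t : nat -> R) (k : nat) : R := tau t k / tau t k.-1.

Definition bdf2 (t : nat -> R) (n j : nat) : R :=
  if n == 1%N then (if j == 0%N then 1 / tau t 1 else 0)
  else if j == 0%N then (1 + 2 * tratio t n) / (tau t n * (1 + tratio t n))
  else if j == 1%N then - (tratio t n ^+ 2) / (tau t n * (1 + tratio t n))
  else 0.

(* grid functions are v : nat -> R, only indices 0..M matter *)
Definition in_Vh (M : nat) (v : nat -> R) : Prop := v 0%N = 0 /\ v M = 0.
Definition lap_h (h : R) (v : nat -> R) (i : nat) : R :=
  (v i.+1 - 2 * v i + v i.-1) / h ^+ 2.
Definition grad_h (h : R) (v : nat -> R) (i : nat) : R :=
  (v i.+1 - v i.-1) / (2 * h).
Definition ip_h (M : nat) (h : R) (u v : nat -> R) : R :=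
  \sum_(1 <= i < M) h * u i * v i.
Definition norm_h (M : nat) (h : R) (u : nat -> R) : R := Num.sqrt (ip_h M h u u).
End Defs.

From HB Require Import structures.
From mathcomp Require Import all_boot all_order all_algebra.
From mathcomp Require Import ring lra zify.

Set Implicit Arguments.
Unset Strict Implicit.
Unset Printing Implicit Defensive.
Import Order.TTheory GRing.Theory Num.Theory.
Local Open Scope ring_scope.

(* Put [v^k = \sum_j theta^(k)_(k-j) a^j].  The DOC kernels invert the BDF2 operator, so
   [v] is the forward solution of [b^(k)_0 v^k + b^(k)_1 v^(k-1) = a^k] with [v^1 = 0], and the
   two DOC double sums become [\sum_k v^k a^k] and [\sum_k v^k b^k].  For step ratios up to
   [S^2 = rmax - delta] the BDF2 form is coercive,
     [2 v^k (B v)^k >= C_r delta (v^k)^2 / tau_k + E_k - E_(k-1)],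
   with the telescoping energy [E_k = S^3 / (1 + S^2) (v^k)^2 / tau_k]; the constant
   [C_r delta] comes from [rmax^3 = (2 rmax + 1)^2].  Young's inequality absorbs
   [2 eps v^k b^k] into [C_r delta (v^k)^2 / tau_k] and [eps^2 / (C_r delta) tau_k (b^k)^2].
   On the grid, summation by parts turns both inner products into sums over cells of this
   scalar form, with [a] the forward difference and [b] the cell average of [u]. *)

Lemma rmax_sqrt_root (R : realDomainType) (s : R) :
  0 < s -> (s ^+ 2) ^+ 3 = (2 * s ^+ 2 + 1) ^+ 2 -> s ^+ 3 = 2 * s ^+ 2 + 1.
Proof.
move=> s_gt0; rewrite -exprM mulnC exprM => /eqP.
by rewrite eqrXn2 ?exprn_ge0 ?ltW // => [/eqP|]; nra.
Qed.

(* With [s ^+ 3 = 2 s^2 + 1] the gap factors as [(s - S) (S^2 + (s - 2) S + s (s - 2))],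
   and [s (s - 2) = 1 / s]. *)
Lemma Cr_gap_le (R : realFieldType) (s S : R) :
  0 < s -> s ^+ 3 = 2 * s ^+ 2 + 1 -> 0 <= S -> S <= s ->
  s / (1 + s ^+ 2) ^+ 2 * (s ^+ 2 - S ^+ 2) * (1 + S ^+ 2) <= 1 + 2 * S ^+ 2 - S ^+ 3.
Proof.
move=> s_gt0 s_root S_ge0 S_le_s.
have s_ge2 : 2 <= s by nra.
have gap_factor : 1 + 2 * S ^+ 2 - S ^+ 3
    = (s - S) * (S ^+ 2 + (s - 2) * S + s * (s - 2)).
  apply/eqP; rewrite -subr_eq0; apply/eqP.
  transitivity (2 * s ^+ 2 + 1 - s ^+ 3); first ring.
  by rewrite s_root subrr.
have sq_pos : 0 < (1 + s ^+ 2) ^+ 2 by apply: exprn_gt0; nra.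
have lhs_factor : s / (1 + s ^+ 2) ^+ 2 * (s ^+ 2 - S ^+ 2) * (1 + S ^+ 2)
    = (s - S) * (s * (s + S) * (1 + S ^+ 2) / (1 + s ^+ 2) ^+ 2) by ring.
rewrite gap_factor lhs_factor; apply: ler_wpM2l; first lra.
rewrite ler_pdivrMr // -(ler_pM2l s_gt0).
have s_cube : s ^+ 2 * (s - 2) = 1 by nra.
have quad_ge : 1 + S ^+ 2 <= s * (S ^+ 2 + (s - 2) * S + s * (s - 2)).
  have : 0 <= (s - 1) * S ^+ 2 + s * (s - 2) * S.
    by apply: addr_ge0; apply: mulr_ge0; rewrite ?sqr_ge0 ?mulr_ge0 //; lra.
  nra.
have sqr_ge : s ^+ 2 * (s + S) <= (1 + s ^+ 2) ^+ 2 by nra.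
rewrite [leLHS](_ : _ = s ^+ 2 * (s + S) * (1 + S ^+ 2)); last ring.
rewrite [leRHS](_ : _ = (1 + s ^+ 2) ^+ 2 * (s * (S ^+ 2 + (s - 2) * S + s * (s - 2)))); last ring.
apply: le_trans (_ : (1 + s ^+ 2) ^+ 2 * (1 + S ^+ 2) <= _).
  by apply: ler_wpM2r; nra.
by apply: ler_wpM2l; first exact: ltW.
Qed.

Lemma Cr_delta_le (R : rcfType) (rmax delta S : R) :
  0 < rmax -> rmax ^+ 3 = (2 * rmax + 1) ^+ 2 -> 0 <= delta -> 0 <= S ->
  S ^+ 2 = rmax - delta ->
  Num.sqrt rmax / (1 + rmax) ^+ 2 * delta * (1 + S ^+ 2) <= 1 + 2 * S ^+ 2 - S ^+ 3.
Proof.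
move=> rmax_gt0 rmax_eq delta_ge0 S_ge0 S_sq.
set s := Num.sqrt rmax.
have s_gt0 : 0 < s by rewrite sqrtr_gt0.
have s_sq : s ^+ 2 = rmax by rewrite sqr_sqrtr ?ltW.
have S_le_s : S <= s.
  by rewrite -(ger0_norm S_ge0) -sqrtr_sqr S_sq; apply: ler_wsqrtr; lra.
have := Cr_gap_le s_gt0 (rmax_sqrt_root s_gt0 _) S_ge0 S_le_s.
by rewrite s_sq S_sq (_ : rmax - (rmax - delta) = delta) //; [apply | ring].
Qed.

Definition bdf2_op {R : rcfType} (t v : nat -> R) (k : nat) : R :=
  bdf2 t k 0 * v k + bdf2 t k 1 * v k.-1.

Section BDF2Kernels.
Variables (R : rcfType) (t : nat -> R) (k : nat).
Hypothesis k_neq1 : k != 1%N.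

Lemma bdf2_0 : bdf2 t k 0 = (1 + 2 * tratio t k) / (tau t k * (1 + tratio t k)).
Proof. by rewrite /bdf2 (negbTE k_neq1). Qed.

Lemma bdf2_1 : bdf2 t k 1 = - (tratio t k ^+ 2) / (tau t k * (1 + tratio t k)).
Proof. by rewrite /bdf2 (negbTE k_neq1). Qed.

Lemma bdf2_ge2 j : (2 <= j)%N -> bdf2 t k j = 0.
Proof. by case: j => [|[|j]] //; rewrite /bdf2 (negbTE k_neq1). Qed.

End BDF2Kernels.

Definition energy_weight {R : fieldType} (S : R) : R := S ^+ 3 / (1 + S ^+ 2).

Section BDF2Energy.
Variables (R : rcfType) (S Cd : R).
Hypotheses (S_gt0 : 0 < S) (Cd_ge0 : 0 <= Cd)
  (Cd_le : Cd * (1 + S ^+ 2) <= 1 + 2 * S ^+ 2 - S ^+ 3).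

Local Notation K := (energy_weight S).

Let S_pos : 0 < 1 + S ^+ 2.
Proof. by rewrite ltr_pwDl ?sqr_ge0. Qed.

Let K_mul : K * (1 + S ^+ 2) = S ^+ 3.
Proof. by rewrite /energy_weight mulfVK // gt_eqF. Qed.

Let K_ge0 : 0 <= K.
Proof. by rewrite /energy_weight divr_ge0 ?exprn_ge0 ?ltW. Qed.

Let Cd_K_le2 : Cd + K <= 2.
Proof. by rewrite -(ler_pM2r S_pos) mulrDl K_mul; move: Cd_le; lra. Qed.

Let Cd_K_rate (r : R) : 0 <= r -> r <= S ^+ 2 -> (1 + r) * (Cd + K) + r * S <= 2 + 4 * r.
Proof.
move=> r_ge0 r_le.
have at_S2 : (1 + S ^+ 2) * (Cd + K) + S ^+ 2 * S <= 2 + 4 * S ^+ 2.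
  have -> : (1 + S ^+ 2) * (Cd + K) = Cd * (1 + S ^+ 2) + K * (1 + S ^+ 2) by ring.
  rewrite K_mul; have : 0 <= Cd * (1 + S ^+ 2) by rewrite mulr_ge0 //; nra.
  rewrite -exprSr; move: Cd_le; lra.
(* the inequality is affine in r and holds at r = 0 and r = S^2 *)
have S2_gt0 : 0 < S ^+ 2 by rewrite exprn_gt0.
rewrite -subr_ge0 -(pmulr_rge0 _ S2_gt0).
have -> : S ^+ 2 * (2 + 4 * r - ((1 + r) * (Cd + K) + r * S))
    = (S ^+ 2 - r) * (2 - (Cd + K)) + r * (2 + 4 * S ^+ 2 - ((1 + S ^+ 2) * (Cd + K) + S ^+ 2 * S)).
  ring.
by move: Cd_K_le2 => le2; apply: addr_ge0; apply: mulr_ge0; lra.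
Qed.

Let sqrt_le_S (r : R) : 0 <= r -> r <= S ^+ 2 -> Num.sqrt r <= S.
Proof. by move=> r_ge0 r_le; rewrite -(ger0_norm (ltW S_gt0)) -sqrtr_sqr ler_sqrt ?sqr_ge0. Qed.

(* [x ^+ 3 / (1 + x ^+ 2)] is increasing. *)
Let cube_le_K (x : R) : 0 <= x -> x <= S -> x ^+ 3 <= K * (1 + x ^+ 2).
Proof.
move=> x_ge0 x_le; rewrite -(ler_pM2r S_pos) [leRHS]mulrAC K_mul.
have : x ^+ 3 <= S ^+ 3 by rewrite lerXn2r // ?nnegrE ltW.
have : 0 <= x ^+ 2 * S ^+ 2 * (S - x).
  by rewrite mulr_ge0 ?subr_ge0 // mulr_ge0 ?sqr_ge0.
nra.
Qed.

Lemma bdf2_energy_poly (r v v' : R) : 0 < r -> r <= S ^+ 2 ->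
  2 * r ^+ 2 * v' * v + (1 + r) * (Cd + K) * v' ^+ 2
    <= K * r * (1 + r) * v ^+ 2 + 2 * (1 + 2 * r) * v' ^+ 2.
Proof.
move=> r_gt0 r_le.
set s := Num.sqrt r.
have s_ge0 : 0 <= s by apply: sqrtr_ge0.
have s_sq : s ^+ 2 = r by rewrite sqr_sqrtr // ltW.
have amgm : 2 * r ^+ 2 * v' * v <= r * s * (v' ^+ 2 + r * v ^+ 2).
  have : 0 <= s ^+ 3 * (v' - s * v) ^+ 2 by rewrite mulr_ge0 ?sqr_ge0 // exprn_ge0.
  rewrite -s_sq; nra.
have weight_v : r * s * (r * v ^+ 2) <= K * (1 + r) * (r * v ^+ 2).
  apply: ler_wpM2r; first by rewrite mulr_ge0 ?sqr_ge0 ?ltW.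
  by rewrite -s_sq -exprSr cube_le_K // sqrt_le_S // ltW.
have weight_v' : s * (r * v' ^+ 2) <= S * (r * v' ^+ 2).
  by apply: ler_wpM2r; [rewrite mulr_ge0 ?sqr_ge0 ?ltW | exact: sqrt_le_S (ltW r_gt0) r_le].
have rate := Cd_K_rate (ltW r_gt0) r_le.
have : 0 <= (2 + 4 * r - ((1 + r) * (Cd + K) + r * S)) * v' ^+ 2.
  by rewrite mulr_ge0 ?sqr_ge0 // subr_ge0.
nra.
Qed.

Variables (t : nat -> R) (N : nat).
Hypotheses (tau_gt0 : forall k, (1 <= k <= N)%N -> 0 < tau t k)
  (ratio_le : forall k, (3 <= k <= N)%N -> tratio t k <= S ^+ 2).

Let bdf2_energy_first v : (2 <= N)%N ->
  (Cd + K) * (v ^+ 2 / tau t 2) <= 2 * (v * (bdf2 t 2 0 * v)).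
Proof.
move=> N_ge2.
have tau2 : 0 < tau t 2 by rewrite tau_gt0.
have r_gt0 : 0 < tratio t 2 by rewrite divr_gt0 // tau_gt0 // (leq_trans _ N_ge2).
rewrite bdf2_0 //; set r := tratio t 2 in r_gt0 *.
rewrite -subr_ge0.
have -> : 2 * (v * ((1 + 2 * r) / (tau t 2 * (1 + r)) * v)) - (Cd + K) * (v ^+ 2 / tau t 2)
    = ((2 - (Cd + K)) * (1 + r) + 2 * r) * v ^+ 2 / (tau t 2 * (1 + r)).
  by field; rewrite !gt_eqF //; lra.
have le2 := Cd_K_le2.
apply: divr_ge0; last by apply: mulr_ge0; lra.
by apply: mulr_ge0; [apply: addr_ge0; [apply: mulr_ge0|]; lra | exact: sqr_ge0].
Qed.

Let bdf2_energy_step k v v' : (3 <= k <= N)%N ->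
  (Cd + K) * (v' ^+ 2 / tau t k)
    <= K * (v ^+ 2 / tau t k.-1) + 2 * (v' * (bdf2 t k 0 * v' + bdf2 t k 1 * v)).
Proof.
move=> k_range.
have k_neq1 : k != 1%N by case/andP: k_range; case: k => [|[|k]].
have tauk : 0 < tau t k by rewrite tau_gt0 //; lia.
have tauk1 : 0 < tau t k.-1 by rewrite tau_gt0 //; lia.
have := bdf2_energy_poly v v' (divr_gt0 tauk tauk1) (ratio_le k_range).
rewrite bdf2_0 // bdf2_1 // -/(tratio t k) => poly.
have tau_prev : tau t k.-1 = tau t k / tratio t k.
  by rewrite /tratio invf_div mulrC divfK // gt_eqF.
rewrite tau_prev -subr_ge0.
set r := tratio t k in poly tau_prev *.
have r_gt0 : 0 < r by rewrite divr_gt0.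
have -> : K * (v ^+ 2 / (tau t k / r)) + 2 * (v' * ((1 + 2 * r) / (tau t k * (1 + r)) * v'
        + - r ^+ 2 / (tau t k * (1 + r)) * v)) - (Cd + K) * (v' ^+ 2 / tau t k)
    = (K * r * (1 + r) * v ^+ 2 + 2 * (1 + 2 * r) * v' ^+ 2
        - (2 * r ^+ 2 * v' * v + (1 + r) * (Cd + K) * v' ^+ 2)) / (tau t k * (1 + r)).
  by field; rewrite !gt_eqF //; lra.
by apply: divr_ge0; [rewrite subr_ge0 | apply: mulr_ge0; lra].
Qed.

Let bdf2_energy_telescope v m : v 1%N = 0 -> (2 <= m <= N)%N ->
  Cd * (\sum_(2 <= k < m.+1) v k ^+ 2 / tau t k) + K * (v m ^+ 2 / tau t m)
    <= 2 * \sum_(2 <= k < m.+1) v k * bdf2_op t v k.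
Proof.
case: m => [|[|m]] // v1 /andP[_]; elim: m => [|m IH] mN.
  rewrite !big_nat1 /bdf2_op v1 mulr0 addr0.
  by have := bdf2_energy_first (v 2%N) mN; lra.
rewrite big_nat_recr //= [X in _ <= 2 * X]big_nat_recr //=.
have := IH (ltnW mN).
have := bdf2_energy_step (k := m.+3) (v m.+2) (v m.+3) mN; rewrite /bdf2_op /=.
lra.
Qed.

Lemma bdf2_energy v m : v 1%N = 0 -> (2 <= m <= N)%N ->
  Cd * (\sum_(2 <= k < m.+1) v k ^+ 2 / tau t k) <= 2 * \sum_(2 <= k < m.+1) v k * bdf2_op t v k.
Proof.
move=> v1 m_range; have := bdf2_energy_telescope v1 m_range.
have : 0 <= K * (v m ^+ 2 / tau t m).
  rewrite mulr_ge0 ?K_ge0 // divr_ge0 ?sqr_ge0 // ltW // tau_gt0 //.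
  by case/andP: m_range => /ltnW ->.
lra.
Qed.

End BDF2Energy.

Fixpoint bdf2_inv {R : rcfType} (t a : nat -> R) (k : nat) : R :=
  if k is k'.+1 then
    if k' is 0 then 0 else (a k - bdf2 t k 1 * bdf2_inv t a k') / bdf2 t k 0
  else 0.

Section DOCKernels.
Variables (R : rcfType) (t : nat -> R) (N : nat) (theta : nat -> nat -> R).
Hypotheses (tau_gt0 : forall k, (1 <= k <= N)%N -> 0 < tau t k)
  (theta_doc : forall m k, (1 <= k)%N -> (k <= m)%N -> (m <= N)%N ->
     \sum_(k <= j < m.+1) theta m (m - j)%N * bdf2 t j (j - k)%N = (k == m)%:R).

Lemma bdf2_0_gt0 k : (2 <= k <= N)%N -> 0 < bdf2 t k 0.
Proof.
move=> k_range; rewrite bdf2_0; last by apply/eqP; lia.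
have tauk : 0 < tau t k by rewrite tau_gt0 //; lia.
have r_gt0 : 0 < tratio t k by rewrite divr_gt0 // tau_gt0 //; lia.
by rewrite divr_gt0 ?mulr_gt0 //; lra.
Qed.

Lemma bdf2_invK a k : (2 <= k <= N)%N -> bdf2_op t (bdf2_inv t a) k = a k.
Proof.
case: k => [|[|k]] // k_range; have := bdf2_0_gt0 k_range.
by rewrite /bdf2_op /= => b0_gt0; rewrite mulrC divfK ?gt_eqF // subrK.
Qed.

Lemma bdf2_conv w k : (2 <= k)%N -> w 1%N = 0 ->
  \sum_(2 <= l < k.+1) bdf2 t k (k - l)%N * w l = bdf2_op t w k.
Proof.
case: k => [|[|k]] // _ w1; rewrite /bdf2_op big_nat_recr //= subnn.
case: k => [|k]; first by rewrite big_geq // w1 !mulr0 add0r addr0.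
rewrite big_nat_recr //= big1_seq ?add0r => [|l]; first by rewrite subSnn addrC.
by rewrite mem_index_iota => /andP[_ /andP[_ l_lt]]; rewrite bdf2_ge2 ?mul0r //; lia.
Qed.

(* [theta_doc] states [Theta * B = I] for the lower triangular matrices of the kernels;
   applied to [B (bdf2_inv a) = a] it gives [Theta a = bdf2_inv a]. *)
Lemma doc_conv a k : (2 <= k <= N)%N ->
  \sum_(2 <= j < k.+1) theta k (k - j)%N * a j = bdf2_inv t a k.
Proof.
move=> k_range; set v := bdf2_inv t a.
transitivity (\sum_(2 <= j < k.+1) \sum_(2 <= l < k.+1 | (l < j.+1)%N)
                theta k (k - j)%N * (bdf2 t j (j - l)%N * v l)).
  apply: eq_big_nat => j j_range.
  rewrite -(big_nat_widen _ _ _ predT) ?ltnS; last lia.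
  by rewrite -mulr_sumr bdf2_conv ?bdf2_invK //; lia.
rewrite (exchange_big_dep_nat predT) //=.
transitivity (\sum_(2 <= l < k.+1) v l * (l == k)%:R).
  apply: eq_big_nat => l l_range.
  rewrite -(theta_doc (m := k) (k := l)) ?mulr_sumr; try lia.
  rewrite (@big_nat_widenl _ _ _ l 2 k.+1 predT) /=; last lia.
  by apply: eq_big => [j|j _]; [rewrite ltnS | rewrite mulrA mulrC].
rewrite big_nat_recr /=; last lia.
rewrite eqxx mulr1 big1_seq ?add0r // => l.
by rewrite mem_index_iota => /andP[_ l_range]; rewrite (_ : l == k = false) ?mulr0 //; lia.
Qed.

End DOCKernels.

Definition fwd_diff {R : fieldType} (h : R) (x : nat -> R) (i : nat) : R := (x i.+1 - x i) / h.
Definition mid_avg {R : fieldType} (x : nat -> R) (i : nat) : R := (x i + x i.+1) / 2.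

Lemma doc_sum_grid (R : comPzRingType) (theta : nat -> nat -> R) (F : nat -> nat -> R)
    (G : nat -> nat -> nat -> R) n M h :
  (forall j k, (2 <= j <= k)%N -> (k <= n)%N -> F j k = \sum_(0 <= i < M) h * G j k i) ->
  \sum_(2 <= k < n.+1) \sum_(2 <= j < k.+1) theta k (k - j)%N * F j k
    = \sum_(0 <= i < M) h * \sum_(2 <= k < n.+1) \sum_(2 <= j < k.+1) theta k (k - j)%N * G j k i.
Proof.
move=> FG.
transitivity (\sum_(2 <= k < n.+1) \sum_(2 <= j < k.+1) \sum_(0 <= i < M)
                h * (theta k (k - j)%N * G j k i)).
  apply: eq_big_nat => k k_range; apply: eq_big_nat => j j_range.
  by rewrite FG ?mulr_sumr; [apply: eq_bigr => i _; rewrite mulrCA | lia..].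
under eq_bigr do rewrite exchange_big; rewrite exchange_big.
by apply: eq_bigr => i _; rewrite mulr_sumr; apply: eq_bigr => k _; rewrite mulr_sumr.
Qed.

Section GridIdentities.
Variable R : rcfType.
Implicit Types (x y : nat -> R) (h : R).

Lemma sum_by_parts_lap x y M :
  \sum_(0 <= i < M.+1) (x i.+1 - x i) * (y i.+1 - y i)
    = \sum_(1 <= i < M.+1) - (x i.+1 - 2 * x i + x i.-1) * y i
      + (x M.+1 - x M) * y M.+1 - (x 1%N - x 0%N) * y 0%N.
Proof.
elim: M => [|M IH]; first by rewrite big_nat1 big_geq //; ring.
by rewrite big_nat_recr // IH [in RHS]big_nat_recr //=; ring.
Qed.

Lemma sum_by_parts_grad x y M :
  \sum_(0 <= i < M.+1) (x i.+1 - x i) * (y i + y i.+1)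
    = \sum_(1 <= i < M.+1) (x i.+1 - x i.-1) * y i
      + x M.+1 * y M.+1 - x M * y M.+1 + x 1%N * y 0%N - x 0%N * y 0%N.
Proof.
elim: M => [|M IH]; first by rewrite big_nat1 big_geq //; ring.
by rewrite big_nat_recr // IH [in RHS]big_nat_recr //=; ring.
Qed.

Lemma sum_sqr_adjacent y M :
  \sum_(0 <= i < M.+1) (y i ^+ 2 + y i.+1 ^+ 2)
    = 2 * \sum_(1 <= i < M.+1) y i ^+ 2 + y 0%N ^+ 2 + y M.+1 ^+ 2.
Proof.
elim: M => [|M IH]; first by rewrite big_nat1 big_geq //; ring.
by rewrite big_nat_recr // IH [in RHS]big_nat_recr //=; ring.
Qed.

Lemma ip_lap M h x y : 0 < h -> in_Vh M x -> in_Vh M y ->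
  ip_h M h (fun i => - lap_h h x i) y = \sum_(0 <= i < M) h * (fwd_diff h x i * fwd_diff h y i).
Proof.
move=> h_gt0 [x0 xM] [y0 yM]; rewrite /ip_h /lap_h /fwd_diff.
case: M xM yM => [|M] xM yM; first by rewrite !big_geq.
transitivity (h^-1 * \sum_(0 <= i < M.+1) (x i.+1 - x i) * (y i.+1 - y i)).
  rewrite sum_by_parts_lap xM yM x0 y0 !mulr0 !subr0 addr0 mulr_sumr.
  by apply: eq_bigr => i _; field; rewrite gt_eqF.
by rewrite mulr_sumr; apply: eq_bigr => i _; field; rewrite gt_eqF.
Qed.

Lemma ip_grad M h x y : 0 < h -> in_Vh M x -> in_Vh M y ->
  ip_h M h (grad_h h x) y = \sum_(0 <= i < M) h * (fwd_diff h x i * mid_avg y i).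
Proof.
move=> h_gt0 [x0 xM] [y0 yM]; rewrite /ip_h /grad_h /fwd_diff /mid_avg.
case: M xM yM => [|M] xM yM; first by rewrite !big_geq.
transitivity (2^-1 * \sum_(0 <= i < M.+1) (x i.+1 - x i) * (y i + y i.+1)).
  rewrite sum_by_parts_grad xM yM x0 y0 !mulr0 !subr0 !addr0 mulr_sumr.
  by apply: eq_bigr => i _; field; rewrite gt_eqF.
by rewrite mulr_sumr; apply: eq_bigr => i _; field; rewrite gt_eqF.
Qed.

Lemma sum_mid_avg_sqr_le M h y : 0 < h -> in_Vh M y ->
  \sum_(0 <= i < M) h * mid_avg y i ^+ 2 <= norm_h M h y ^+ 2.
Proof.
move=> h_gt0 [y0 yM].
rewrite /norm_h /ip_h sqr_sqrtr; last first.
  by apply: sumr_ge0 => i _; rewrite -mulrA -expr2 mulr_ge0 ?sqr_ge0 // ltW.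
case: M yM => [|M] yM; first by rewrite !big_geq.
apply: (@le_trans _ _ (\sum_(0 <= i < M.+1) h * ((y i ^+ 2 + y i.+1 ^+ 2) / 2))).
  apply: ler_sum => i _; apply: ler_wpM2l; first exact: ltW.
  by have := sqr_ge0 (y i - y i.+1); rewrite /mid_avg; nra.
rewrite -mulr_sumr -mulr_suml sum_sqr_adjacent y0 yM.
rewrite (_ : \sum_(1 <= i < M.+1) h * y i * y i = h * \sum_(1 <= i < M.+1) y i ^+ 2).
  by rewrite expr0n /= !addr0 mulrAC divff ?mul1r // pnatr_eq0.
by rewrite mulr_sumr; apply: eq_bigr => i _; rewrite -mulrA -expr2.
Qed.

Lemma sum_mid_avg_sqr_weighted_le (c : nat -> R) (u : nat -> nat -> R) n M h : 0 < h ->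
  (forall k, (2 <= k <= n)%N -> 0 <= c k /\ in_Vh M (u k)) ->
  \sum_(0 <= i < M) h * \sum_(2 <= k < n.+1) c k * mid_avg (u k) i ^+ 2
    <= \sum_(2 <= k < n.+1) c k * norm_h M h (u k) ^+ 2.
Proof.
move=> h_gt0 c_u; under eq_bigr do rewrite mulr_sumr; rewrite exchange_big /=.
apply: ler_sum_nat => k k_range; have [c_ge0 u_Vh] := c_u k k_range.
under eq_bigr do rewrite mulrCA; rewrite -mulr_sumr.
by apply: ler_wpM2l => //; apply: sum_mid_avg_sqr_le.
Qed.

End GridIdentities.

Lemma young_weighted (R : realFieldType) (c eps tk v b : R) : 0 < c -> 0 < tk ->
  2 * eps * (v * b) <= eps ^+ 2 / c * (tk * b ^+ 2) + c * (v ^+ 2 / tk).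
Proof.
move=> c_gt0 tk_gt0; rewrite -subr_ge0.
have -> : eps ^+ 2 / c * (tk * b ^+ 2) + c * (v ^+ 2 / tk) - 2 * eps * (v * b)
    = (eps * tk * b - c * v) ^+ 2 / (c * tk).
  by field; rewrite !gt_eqF.
by rewrite divr_ge0 ?sqr_ge0 // mulr_ge0 ?ltW.
Qed.

Section DOCEnergy.
Variables (R : rcfType) (S Cd : R) (t : nat -> R) (N : nat) (theta : nat -> nat -> R).
Hypotheses (S_gt0 : 0 < S) (Cd_gt0 : 0 < Cd)
  (Cd_le : Cd * (1 + S ^+ 2) <= 1 + 2 * S ^+ 2 - S ^+ 3)
  (tau_gt0 : forall k, (1 <= k <= N)%N -> 0 < tau t k)
  (ratio_le : forall k, (3 <= k <= N)%N -> tratio t k <= S ^+ 2)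
  (theta_doc : forall m k, (1 <= k)%N -> (k <= m)%N -> (m <= N)%N ->
     \sum_(k <= j < m.+1) theta m (m - j)%N * bdf2 t j (j - k)%N = (k == m)%:R).

Lemma doc_energy eps (a b : nat -> R) n : (2 <= n <= N)%N ->
  2 * eps * (\sum_(2 <= k < n.+1) \sum_(2 <= j < k.+1) theta k (k - j)%N * (a j * b k))
    <= 2 * (\sum_(2 <= k < n.+1) \sum_(2 <= j < k.+1) theta k (k - j)%N * (a j * a k))
       + eps ^+ 2 / Cd * (\sum_(2 <= k < n.+1) tau t k * b k ^+ 2).
Proof.
move=> n_range; set v := bdf2_inv t a.
have doc_mul k X : (2 <= k <= n)%N ->
    \sum_(2 <= j < k.+1) theta k (k - j)%N * (a j * X) = v k * X.
  move=> k_range; rewrite /v -(doc_conv tau_gt0 theta_doc) ?mulr_suml; last lia.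
  by apply: eq_bigr => j _; rewrite mulrA.
have -> : \sum_(2 <= k < n.+1) \sum_(2 <= j < k.+1) theta k (k - j)%N * (a j * a k)
    = \sum_(2 <= k < n.+1) v k * bdf2_op t v k.
  by apply: eq_big_nat => k k_range; rewrite doc_mul ?(bdf2_invK tau_gt0) //; lia.
have -> : \sum_(2 <= k < n.+1) \sum_(2 <= j < k.+1) theta k (k - j)%N * (a j * b k)
    = \sum_(2 <= k < n.+1) v k * b k.
  by apply: eq_big_nat => k k_range; rewrite doc_mul //; lia.
have energy := bdf2_energy S_gt0 (ltW Cd_gt0) Cd_le tau_gt0 ratio_le (erefl : v 1%N = 0) n_range.
have young : \sum_(2 <= k < n.+1) 2 * eps * (v k * b k)
    <= \sum_(2 <= k < n.+1) (eps ^+ 2 / Cd * (tau t k * b k ^+ 2) + Cd * (v k ^+ 2 / tau t k)).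
  by apply: ler_sum_nat => k k_range; rewrite young_weighted // tau_gt0 //; lia.
rewrite -mulr_sumr big_split /= -!mulr_sumr in young.
lra.
Qed.

Lemma doc_grid_energy eps M h (u : nat -> nat -> R) n : 0 < h -> (2 <= n <= N)%N ->
  (forall k, (2 <= k <= n)%N -> in_Vh M (u k)) ->
  2 * eps * (\sum_(2 <= k < n.+1) \sum_(2 <= j < k.+1)
               theta k (k - j)%N * ip_h M h (grad_h h (u j)) (u k))
    <= 2 * (\sum_(2 <= k < n.+1) \sum_(2 <= j < k.+1)
              theta k (k - j)%N * ip_h M h (fun i => - lap_h h (u j) i) (u k))
       + eps ^+ 2 / Cd * (\sum_(2 <= k < n.+1) tau t k * norm_h M h (u k) ^+ 2).
Proof.
move=> h_gt0 n_range u_Vh.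
rewrite (doc_sum_grid theta (M := M) (h := h)
           (G := fun j k i => fwd_diff h (u j) i * mid_avg (u k) i)); last first.
  by move=> j k ? ?; rewrite /= ip_grad //; apply: u_Vh; lia.
rewrite (doc_sum_grid theta (M := M) (h := h)
           (G := fun j k i => fwd_diff h (u j) i * fwd_diff h (u k) i)); last first.
  by move=> j k ? ?; rewrite /= ip_lap //; apply: u_Vh; lia.
have norm_ge : \sum_(0 <= i < M) h * \sum_(2 <= k < n.+1) tau t k * mid_avg (u k) i ^+ 2
    <= \sum_(2 <= k < n.+1) tau t k * norm_h M h (u k) ^+ 2.
  apply: sum_mid_avg_sqr_weighted_le => // k k_range.
  by split; [apply/ltW/tau_gt0 | apply: u_Vh]; lia.
set c := eps ^+ 2 / Cd.
apply: le_trans (lerD (lexx _) (ler_wpM2l (divr_ge0 (sqr_ge0 eps) (ltW Cd_gt0)) norm_ge)).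
rewrite [2 * eps * _]mulr_sumr [2 * \sum_(0 <= i < M) _]mulr_sumr.
rewrite [c * \sum_(0 <= i < M) _]mulr_sumr -big_split /=; apply: ler_sum => i _.
rewrite mulrCA [2 * (h * _)]mulrCA [c * (h * _)]mulrCA -mulrDr.
by apply: ler_wpM2l; [exact: ltW | exact: doc_energy].
Qed.

End DOCEnergy.

Theorem mainTheorem8 (R : rcfType) (N : nat) (t : nat -> R)
  (rmax delta : R) (theta : nat -> nat -> R)
  (M : nat) (h eps : R) (n : nat) (u : nat -> nat -> R) :
  t 0%N = 0 ->
  (forall k, (k < N)%N -> t k < t k.+1) ->
  0 < rmax -> rmax ^+ 3 = (2 * rmax + 1) ^+ 2 ->
  0 < delta -> delta < rmax ->
  (2 <= N)%N -> 0 < tratio t 2 ->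
  (forall k, (3 <= k <= N)%N -> 0 < tratio t k /\ tratio t k <= rmax - delta) ->
  (* DOC kernels: theta n m = theta^{(n)}_m *)
  (forall m k, (1 <= k)%N -> (k <= m)%N -> (m <= N)%N ->
     \sum_(k <= j < m.+1) theta m (m - j)%N * bdf2 t j (j - k)%N
       = (k == m)%:R) ->
  0 < h -> 0 < eps ->
  (2 <= n)%N -> (n <= N)%N ->
  (forall k, (1 <= k <= n)%N -> in_Vh M (u k)) ->
  let Cr := Num.sqrt rmax / (1 + rmax) ^+ 2 in
  2 * (\sum_(2 <= k < n.+1) \sum_(2 <= j < k.+1)
         theta k (k - j)%N * ip_h M h (fun i => - lap_h h (u j) i) (u k))
  + eps ^+ 2 / (Cr * delta) * (\sum_(2 <= k < n.+1) tau t k * norm_h M h (u k) ^+ 2)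
  >= 2 * eps * (\sum_(2 <= k < n.+1) \sum_(2 <= j < k.+1)
         theta k (k - j)%N * ip_h M h (grad_h h (u j)) (u k)).
Proof.
move=> _ t_incr rmax_gt0 rmax_eq delta_gt0 delta_lt _ _ ratio_bound theta_doc h_gt0 _
  n_ge2 n_le_N u_Vh /=.
set Cr := Num.sqrt rmax / _.
set S := Num.sqrt (rmax - delta).
have S_sq : S ^+ 2 = rmax - delta by rewrite sqr_sqrtr // subr_ge0 ltW.
have S_gt0 : 0 < S by rewrite sqrtr_gt0 subr_gt0.
have Cd_gt0 : 0 < Cr * delta.
  by rewrite mulr_gt0 // divr_gt0 ?sqrtr_gt0 // exprn_gt0 // ltr_wpDl.
have Cd_le := Cr_delta_le rmax_gt0 rmax_eq (ltW delta_gt0) (ltW S_gt0) S_sq.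
have tau_gt0 k : (1 <= k <= N)%N -> 0 < tau t k.
  by case: k => [|k] // /andP[_ k_le]; rewrite subr_gt0 t_incr.
have ratio_le k : (3 <= k <= N)%N -> tratio t k <= S ^+ 2.
  by move=> k_range; rewrite S_sq; case: (ratio_bound k k_range).
apply: (doc_grid_energy S_gt0 Cd_gt0 Cd_le tau_gt0 ratio_le theta_doc) => //.
  by rewrite n_ge2.
by move=> k k_range; apply: u_Vh; lia.
Qed.
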